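(* Consider the packet spreading algorithm described in the context with any $N\ge 2$ and positive integers $K_1,\dots,K_N$. Then for every $n\in\{1,\dots,N\}$: $x_n^{K-1}=K_n$ (the output pattern of length $K$ contains exactly $K_n$ occurrences of source $n$), $\tilde Q_n^K=\frac{1}{K_n}$, and consequently $B_n^K=0$.
   Context: Packet spreading algorithm: Let $N\ge 2$, let $K_1,\dots,K_N$ be positive integers and $K=\sum_{n=1}^N K_n$. The algorithm runs iterations $k=0,1,\dots,K-1$ and maintains deficit counters $B_n^k$, $1\le n\le N$, with $B_n^0=0$ for all $n$. In iteration $k$, define the quantums $Q_n^k=\frac{(1-B_n^k)K}{K_n}$; select a source $m_k\in\arg\min_{1\le n\le N} Q_n^k$ (ties broken arbitrarily); let $Q=Q_{m_k}^k$; set $B_n^{k+1}=B_n^k+Q\frac{K_n}{K}$ for $n\neq m_k$ and $B_{m_k}^{k+1}=0$; and set the $k$-th entry of the output pattern to $P(k)=m_k$. (Thus $B_n^{K}$ is defined after the last iteration.) Normalized quantums: $\tilde Q_n^k=Q_n^k/K=(1-B_n^k)/K_n$. For $0\le k\le K-1$, $x_n^k$ denotes the number of indices $k'\in\{0,\dots,k\}$ with $m_{k'}=n$. *)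

From HB Require Import structures.
From mathcomp Require Import all_boot all_order all_algebra.
Set Implicit Arguments. Unset Strict Implicit. Unset Printing Implicit Defensive.
Import Order.TTheory GRing.Theory Num.Theory.
Local Open Scope ring_scope.

Section PacketSpreading.
Variables (R : realFieldType) (N : nat) (Kn : 'I_N -> nat).

Definition Ktot : nat := (\sum_(n < N) Kn n)%N.

Definition quantum (B : 'I_N -> R) (n : 'I_N) : R :=
  (1 - B n) * (Ktot%:R) / (Kn n)%:R.

Definition nquantum (B : 'I_N -> R) (n : 'I_N) : R :=
  quantum B n / (Ktot%:R).

Definition Bstep (B : 'I_N -> R) (m : 'I_N) : 'I_N -> R :=
  fun n => if n == m then 0 else B n + quantum B m * (Kn n)%:R / (Ktot%:R).

Fixpoint deficit (m : nat -> 'I_N) (k : nat) : 'I_N -> R :=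
  match k with
  | 0 => fun _ => 0
  | k'.+1 => Bstep (deficit m k') (m k')
  end.

Definition valid_run (m : nat -> 'I_N) : Prop :=
  forall k, (k < Ktot)%N ->
    forall n : 'I_N, quantum (deficit m k) (m k) <= quantum (deficit m k) n.

Definition xcount (m : nat -> 'I_N) (n : 'I_N) (k : nat) : nat :=
  count (fun k' => m k' == n) (iota 0 k.+1).

End PacketSpreading.

(* Write c_n^k for the number of times source n was selected in iterations
   0..k-1.  One iteration lowers every normalized quantum by that of the selected
   source m, except for m itself, which is reset to 1/K_m; by induction
   Q~_n^k = (c_n^k + 1)/K_n - T_k for a common offset T_k.  Hence the algorithm
   always selects a source minimising (c_n^k + 1)/K_n.  A source with c_n^k = K_n
   has ratio > 1, while before iteration K some source still has c_n^k < K_n and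
   ratio <= 1, so no count ever exceeds K_n; as the counts sum to K after K
   iterations, c_n^K = K_n for all n.  The last offset is then
   T_K = (c_m^(K-1) + 1)/K_m = 1, which gives Q~_n^K = 1/K_n and B_n^K = 0. *)
From HB Require Import structures.
From mathcomp Require Import all_boot all_order all_algebra.
From mathcomp Require Import zify ring lra.
Import Order.TTheory GRing.Theory Num.Theory.
Local Open Scope ring_scope.

Set Implicit Arguments.
Unset Strict Implicit.

Lemma leq_sum_eq (I : finType) (E1 E2 : I -> nat) :
  (forall i, E1 i <= E2 i)%N -> (\sum_i E1 i = \sum_i E2 i)%N ->
  forall i, E1 i = E2 i.
Proof.
move=> le12 eq12 i.
have /leqif_sum sum_leqif : forall i, true -> (E1 i <= E2 i ?= iff (E1 i == E2 i))%N.
  by move=> j _; apply/leqif_eq/le12.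
by move: (sum_leqif.2); rewrite eq12 eqxx => /esym/forall_inP/(_ i isT)/eqP.
Qed.

Lemma ler_ratio_nat (R : numFieldType) (a b c d : nat) : (0 < b)%N -> (0 < d)%N ->
  (a%:R / b%:R <= c%:R / d%:R :> R) = (a * d <= c * b)%N.
Proof.
move=> b_gt0 d_gt0.
by rewrite ler_pdivrMr ?ltr0n // mulrAC ler_pdivlMr ?ltr0n // -!natrM ler_nat.
Qed.

Section Selections.
Variables (N : nat) (m : nat -> 'I_N).

Definition nselected (k : nat) (n : 'I_N) : nat :=
  count (fun k' => m k' == n) (iota 0 k).

Lemma nselectedS k n : nselected k.+1 n = (nselected k n + (m k == n))%N.
Proof. by rewrite /nselected -addn1 iotaD count_cat /= add0n addn0. Qed.

Lemma sum_nselected k : (\sum_n nselected k n)%N = k.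
Proof.
elim: k => [|k IHk]; first by rewrite big1.
under eq_bigr => n _ do rewrite nselectedS.
rewrite big_split /= IHk (bigD1 (m k)) //= eqxx big1 ?addn0 ?addn1 // => n.
by rewrite eq_sym => /negPf ->.
Qed.

Lemma xcountE n k : xcount m n k = nselected k.+1 n.
Proof. by []. Qed.

End Selections.

Section PacketSpreading.
Variables (R : realFieldType) (N : nat) (Kn : 'I_N -> nat).
Hypothesis Kn_gt0 : forall n, (0 < Kn n)%N.

Local Notation K := (Ktot Kn).

Lemma Ktot_gt0 (n : 'I_N) : (0 < K)%N.
Proof. by rewrite /Ktot (bigD1 n) //= ltn_addr. Qed.

Lemma Kn_neq0 n : (Kn n)%:R != 0 :> R.
Proof. by rewrite pnatr_eq0 -lt0n. Qed.

Lemma Ktot_neq0 (n : 'I_N) : K%:R != 0 :> R.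
Proof. by rewrite pnatr_eq0 -lt0n (Ktot_gt0 n). Qed.

Lemma nquantumE (B : 'I_N -> R) n : nquantum Kn B n = (1 - B n) / (Kn n)%:R.
Proof. by rewrite /nquantum /quantum mulrAC mulfK ?(Ktot_neq0 n). Qed.

Lemma ler_quantum (B : 'I_N -> R) i j :
  (quantum Kn B i <= quantum Kn B j) = (nquantum Kn B i <= nquantum Kn B j).
Proof. by rewrite /nquantum ler_pM2r // invr_gt0 ltr0n (Ktot_gt0 i). Qed.

Lemma nquantum_Bstep (B : 'I_N -> R) m0 n :
  nquantum Kn (Bstep Kn B m0) n =
  if n == m0 then (Kn n)%:R^-1 else nquantum Kn B n - nquantum Kn B m0.
Proof.
rewrite !nquantumE /Bstep; case: eqP => _; first by rewrite subr0 mul1r.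
rewrite /quantum; field.
by rewrite !Kn_neq0 (Ktot_neq0 n).
Qed.

Variable m : nat -> 'I_N.

Local Notation deficit := (@deficit R N Kn m).
Local Notation ratio k n := ((nselected m k n).+1%:R / (Kn n)%:R : R).

Lemma nquantum_deficit_step k T :
  (forall n, nquantum Kn (deficit k) n = ratio k n - T) ->
  forall n, nquantum Kn (deficit k.+1) n = ratio k.+1 n - ratio k (m k).
Proof.
move=> nqE n; rewrite /= nquantum_Bstep !nqE nselectedS.
case: eqP => [->|/eqP nk]; last by rewrite eq_sym (negPf nk) addn0; ring.
by rewrite eqxx addn1; field; apply: Kn_neq0.
Qed.

Lemma nquantum_deficit k : exists T, forall n, nquantum Kn (deficit k) n = ratio k n - T.
Proof.
elim: k => [|k [T /nquantum_deficit_step nqS]]; last by exists (ratio k (m k)).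
by exists 0 => n; rewrite nquantumE !subr0 mul1r.
Qed.

Lemma nquantum_deficitS k n :
  nquantum Kn (deficit k.+1) n = ratio k.+1 n - ratio k (m k).
Proof. by have [T /nquantum_deficit_step] := nquantum_deficit k; apply. Qed.

Hypothesis m_valid : valid_run R Kn m.

(* A saturated source has ratio > 1, whereas an unsaturated one has ratio <= 1. *)
Lemma nselected_le k n : (k <= K)%N -> (nselected m k n <= Kn n)%N.
Proof.
elim: k => [//|k IHk] lt_k; have le_k := IHk (ltnW lt_k).
rewrite nselectedS; case: eqP => [mk|_]; last by rewrite addn0 le_k.
rewrite addn1 ltn_neqAle le_k andbT; apply/eqP => saturated.
have [n' lt_n'] : exists n', (nselected m k n' < Kn n')%N.
  apply/existsP; apply: contraLR lt_k => /existsPn unsat.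
  rewrite -leqNgt -[k in (_ <= k)%N](sum_nselected m) leq_sum // => i _.
  by rewrite leqNgt unsat.
have [T nqE] := nquantum_deficit k.
have := m_valid lt_k n'; rewrite ler_quantum !nqE lerD2r mk.
by rewrite ler_ratio_nat // saturated; move: (Kn_gt0 n) lt_n'; nia.
Qed.

Lemma nselected_Ktot n : nselected m K n = Kn n.
Proof.
apply: leq_sum_eq n => [n|]; first exact: nselected_le.
by rewrite sum_nselected.
Qed.

End PacketSpreading.

Theorem mainTheorem5 (R : realFieldType) (N : nat) (Kn : 'I_N -> nat)
    (m : nat -> 'I_N) :
  (1 < N)%N ->
  (forall n, (0 < Kn n)%N) ->
  @valid_run R N Kn m ->
  forall n : 'I_N,
    xcount m n (Ktot Kn).-1 = Kn n /\
    @nquantum R N Kn (@deficit R N Kn m (Ktot Kn)) n = ((Kn n)%:R)^-1 /\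
    @deficit R N Kn m (Ktot Kn) n = 0.
Proof.
move=> _ Kn_gt0 m_valid n.
have K_pred : (Ktot Kn).-1.+1 = Ktot Kn by rewrite prednK // (Ktot_gt0 Kn_gt0 n).
have last_count : forall i, nselected m (Ktot Kn).-1.+1 i = Kn i.
  by move=> i; rewrite K_pred (nselected_Ktot Kn_gt0 m_valid).
have last_offset : (nselected m (Ktot Kn).-1 (m (Ktot Kn).-1)).+1 = Kn (m (Ktot Kn).-1).
  by rewrite -addn1 -(last_count (m _)) nselectedS eqxx.
have nq_last : nquantum Kn (deficit R Kn m (Ktot Kn)) n = (Kn n)%:R^-1.
  rewrite -K_pred (nquantum_deficitS R Kn_gt0) last_offset last_count.
  by field; rewrite !Kn_neq0.
split; first by rewrite xcountE last_count.
split=> //; move: nq_last; rewrite nquantumE // => /(congr1 ( *%R^~ (Kn n)%:R)).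
by rewrite divfK ?mulVf ?Kn_neq0 //; lra.
Qed.
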